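(* If $f\in C^2(\mathbb T,\mathbb R)$ is non-degenerate, then $$\mathcal H^0(\{f=0\})=\frac1\pi\int_0^{2\pi}\frac{f'(x)^2-f(x)f''(x)}{f(x)^2+f'(x)^2}\,dx .$$
   Context: $\mathbb T=\mathbb R/2\pi\mathbb Z$, functions on $\mathbb T$ are identified with $2\pi$-periodic functions on $\mathbb R$, and $\mathcal H^0(\{f=0\})$ is the number of zeros of $f$ in one period $[0,2\pi)$. $f$ is non-degenerate if $\min_x\sqrt{f(x)^2+f'(x)^2}>0$. *)

From Stdlib Require Import Reals Lra List.
From Coquelicot Require Import Coquelicot.
Open Scope R_scope.

Definition zero_set_card (f : R -> R) (n : nat) : Prop :=
  exists l : list R, NoDup l /\ length l = n /\
    (forall x, In x l <-> (0 <= x < 2 * PI /\ f x = 0)).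

Definition C2_periodic (f : R -> R) : Prop :=
  (forall x, f (x + 2 * PI) = f x) /\
  (forall x, ex_derive f x) /\
  (forall x, ex_derive (Derive f) x) /\
  (forall x, continuous (Derive (Derive f)) x).

(* Non-degenerate: min_x sqrt(f^2 + f'^2) > 0 (the min exists by continuity
   and periodicity, so this is: a positive lower bound exists). *)
Definition non_degenerate (f : R -> R) : Prop :=
  exists c, 0 < c /\ forall x, c <= sqrt (f x ^ 2 + Derive f x ^ 2).

From Stdlib Require Import Reals Lra List Classical.
From Coquelicot Require Import Coquelicot.
Open Scope R_scope.

(* Since f and f' never vanish together, the vector (f, f') winds around the
   origin, and the integrand is the speed of its clockwise rotation. At a zero
   of f we have f' <> 0 and the vector crosses the vertical axis clockwise (f
   increases where f' > 0), so every zero contributes a half turn. Concretely,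
   atan (f' / f) is the angle modulo PI and jumps by PI exactly at the zeros
   of f. On intervals so short that the bound on f'' keeps f' away from 0 near
   a zero, f has at most one zero and the integral is PI times the number of
   zeros plus the change of this phase; the antiderivatives are
   - atan (f' / f) away from zeros and atan (f / f') near one. These identities
   add up over [0, 2 PI], where periodicity cancels the phase terms. *)

Lemma between_bounds (p q x y z : R) :
  p <= z <= q -> p <= x <= q -> Rmin z x <= y <= Rmax z x ->
  p <= y <= q /\ Rabs (y - z) <= Rabs (x - z).
Proof. unfold Rmin, Rmax; destruct Rle_dec; split_Rabs; lra. Qed.

Lemma MVT_Derive (g : R -> R) (z x : R) :
  (forall y, ex_derive g y) ->
  exists y, Rmin z x <= y <= Rmax z x /\ g x - g z = Derive g y * (x - z).
Proof.
  intros Hg.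
  destruct (MVT_gen g z x (Derive g)) as [y Hy]; [|eauto|eauto].
  - intros y _. apply Derive_correct, Hg.
  - intros y _. apply continuity_pt_filterlim,
      (ex_derive_continuous (K := R_AbsRing) (V := R_NormedModule)), Hg.
Qed.

Lemma Derive_periodic (g : R -> R) (T : R) :
  (forall x, ex_derive g x) -> (forall x, g (x + T) = g x) ->
  forall x, Derive g (x + T) = Derive g x.
Proof.
  intros Hg Hper x.
  rewrite <- (Derive_ext _ _ x Hper).
  rewrite (Derive_comp g (fun y => y + T)) by (auto; auto_derive; auto).
  replace (Derive (fun y => y + T) x) with 1
    by (symmetry; apply is_derive_unique; auto_derive; auto).
  ring.
Qed.

Lemma interval_chain (P : R -> R -> Prop) (a b d : R) :
  0 < d -> a <= b ->
  (forall x y z, a <= x <= y -> y <= z <= b -> P x y -> P y z -> P x z) ->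
  (forall x y, a <= x <= y -> y <= b -> y - x <= d -> P x y) ->
  P a b.
Proof.
  intros Hd Hab Hchain Hshort.
  assert (Hsteps : forall (n : nat) x, a <= x <= b -> b - x <= INR n * d -> P x b).
  { induction n as [|n IH]; intros x Hx Hn.
    - apply Hshort; simpl in Hn; lra.
    - rewrite S_INR in Hn.
      pose (y := Rmin b (x + d)).
      assert (Hy : x <= y <= b /\ y - x <= d /\ b - y <= INR n * d).
      { assert (0 <= INR n * d) by (apply Rmult_le_pos; [apply pos_INR | lra]).
        unfold y, Rmin; destruct Rle_dec; lra. }
      apply Hchain with y; [lra | lra | apply Hshort; lra | apply IH; lra]. }
  destruct (INR_unbounded ((b - a) / d)) as [n Hn].
  apply (Hsteps n); [lra|].
  assert ((b - a) / d * d = b - a) by (field; lra).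
  nra.
Qed.

Lemma atan_inv_sign (t : R) :
  t <> 0 -> atan (/ t) = (if Rlt_dec 0 t then PI / 2 else - (PI / 2)) - atan t.
Proof.
  intros Ht. destruct (Rlt_dec 0 t) as [Hpos | Hneg].
  - now apply atan_inv.
  - replace (/ t) with (- / - t) by (field; exact Ht).
    rewrite atan_opp, atan_inv, atan_opp by lra. ring.
Qed.

Lemma non_degenerate_sum_sq_pos (f : R -> R) :
  non_degenerate f -> forall x, 0 < f x ^ 2 + Derive f x ^ 2.
Proof.
  intros [c [Hc Hnd]] x.
  destruct (Rle_or_lt (f x ^ 2 + Derive f x ^ 2) 0) as [Hle | Hlt]; [|exact Hlt].
  specialize (Hnd x). rewrite sqrt_neg_0 in Hnd; lra.
Qed.

Section Rotation.

Variable f : R -> R.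

(* Minus the derivative of the angle of (f, f'). *)
Definition rotation_rate (x : R) : R :=
  (Derive f x ^ 2 - f x * Derive (Derive f) x) / (f x ^ 2 + Derive f x ^ 2).

(* The angle of (f, f') modulo PI; at a zero of f we take its left limit. *)
Definition phase (x : R) : R :=
  if Req_EM_T (f x) 0 then - (PI / 2) else atan (Derive f x / f x).

Hypothesis f_derivable : forall x, ex_derive f x.
Hypothesis Df_derivable : forall x, ex_derive (Derive f) x.
Hypothesis DDf_continuous : forall x, continuous (Derive (Derive f)) x.
Hypothesis sum_sq_pos : forall x, 0 < f x ^ 2 + Derive f x ^ 2.

Lemma continuous_rotation_rate (x : R) : continuous rotation_rate x.
Proof.
  assert (Hcont : forall g : R -> R, (forall y, ex_derive g y) -> continuity_pt g x).
  { intros g Hg. apply continuity_pt_filterlim,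
      (ex_derive_continuous (K := R_AbsRing) (V := R_NormedModule)), Hg. }
  apply continuity_pt_filterlim.
  apply continuity_pt_ext with
    (fun y => (Derive f y * Derive f y - f y * Derive (Derive f) y)
              / (f y * f y + Derive f y * Derive f y)).
  { intros y. unfold rotation_rate. f_equal; ring. }
  apply continuity_pt_div.
  - apply continuity_pt_minus; apply continuity_pt_mult; auto.
    apply continuity_pt_filterlim, DDf_continuous.
  - apply continuity_pt_plus; apply continuity_pt_mult; auto.
  - specialize (sum_sq_pos x). nra.
Qed.

Lemma is_derive_atan_ratio (x : R) :
  Derive f x <> 0 -> is_derive (fun y => atan (f y / Derive f y)) x (rotation_rate x).
Proof.
  intros Hx. specialize (sum_sq_pos x).
  auto_derive; [auto|].
  change (Derive (fun y => f y)) with (Derive f).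
  change (Derive (fun y => Derive f y)) with (Derive (Derive f)).
  unfold rotation_rate. field. split; [nra | exact Hx].
Qed.

Lemma is_derive_atan_inv_ratio (x : R) :
  f x <> 0 -> is_derive (fun y => - atan (Derive f y / f y)) x (rotation_rate x).
Proof.
  intros Hx. specialize (sum_sq_pos x).
  auto_derive; [auto|].
  change (Derive (fun y => f y)) with (Derive f).
  change (Derive (fun y => Derive f y)) with (Derive (Derive f)).
  unfold rotation_rate. field. split; [nra | exact Hx].
Qed.

Lemma is_RInt_rotation_rate (F : R -> R) (a b : R) :
  a <= b -> (forall x, a <= x <= b -> is_derive F x (rotation_rate x)) ->
  is_RInt rotation_rate a b (F b - F a).
Proof.
  intros Hab HF.
  apply (is_RInt_derive F); rewrite Rmin_left, Rmax_right by exact Hab.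
  - exact HF.
  - intros x _. apply continuous_rotation_rate.
Qed.

Lemma phase_atan_ratio (x : R) :
  Derive f x <> 0 ->
  phase x = (if Rlt_dec 0 (f x / Derive f x) then PI / 2 else - (PI / 2))
            - atan (f x / Derive f x).
Proof.
  intros Hx. unfold phase. destruct (Req_EM_T (f x) 0) as [Hz | Hz].
  - rewrite Hz, Rdiv_0_l, atan_0. destruct Rlt_dec; lra.
  - rewrite <- atan_inv_sign.
    + f_equal. field. auto.
    + apply Rmult_integral_contrapositive_currified; auto with real.
Qed.

Definition counts_zeros (a b : R) : Prop :=
  exists l : list R, NoDup l /\ (forall x, In x l <-> a <= x < b /\ f x = 0) /\
    is_RInt rotation_rate a b (PI * INR (length l) + phase a - phase b).

Lemma counts_zeros_chasles (a m b : R) :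
  a <= m <= b -> counts_zeros a m -> counts_zeros m b -> counts_zeros a b.
Proof.
  intros Hm [l1 [Hl1 [Hin1 Hint1]]] [l2 [Hl2 [Hin2 Hint2]]].
  exists (l1 ++ l2). split; [|split].
  - apply NoDup_app; auto.
    intros x H1 H2. apply Hin1 in H1. apply Hin2 in H2. lra.
  - intros x. rewrite in_app_iff, Hin1, Hin2.
    destruct (Rlt_or_le x m); intuition lra.
  - rewrite length_app, plus_INR.
    replace (PI * (INR (length l1) + INR (length l2)) + phase a - phase b)
      with (plus (PI * INR (length l1) + phase a - phase m)
                 (PI * INR (length l2) + phase m - phase b))
      by (unfold plus; simpl; ring).
    exact (is_RInt_Chasles _ _ _ _ _ _ Hint1 Hint2).
Qed.

Lemma counts_zeros_no_zero (a b : R) :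
  a <= b -> (forall x, a <= x <= b -> f x <> 0) -> counts_zeros a b.
Proof.
  intros Hab Hnz. exists nil. split; [constructor | split].
  - intros x. simpl. split; [tauto|]. intros [Hx Hfx]. apply (Hnz x); [lra | exact Hfx].
  - assert (Hphase : forall x, a <= x <= b -> phase x = atan (Derive f x / f x)).
    { intros x Hx. unfold phase. destruct Req_EM_T; [contradiction (Hnz x Hx) | reflexivity]. }
    replace (PI * INR (length nil) + phase a - phase b)
      with (- atan (Derive f b / f b) - - atan (Derive f a / f a))
      by (rewrite (Hphase a), (Hphase b) by lra; simpl; ring).
    apply (is_RInt_rotation_rate (fun y => - atan (Derive f y / f y))); [exact Hab|].
    intros x Hx. apply is_derive_atan_inv_ratio, Hnz, Hx.
Qed.

Lemma counts_zeros_simple_zero (a b z : R) :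
  a <= z <= b -> f z = 0 ->
  (forall x, a <= x <= b -> Derive f x <> 0) ->
  (forall x, a <= x <= b -> x <> z -> 0 < (x - z) * (f x / Derive f x)) ->
  counts_zeros a b.
Proof.
  intros Hz Hfz HDf Hsign.
  assert (Hzero : forall x, a <= x <= b -> f x = 0 -> x = z).
  { intros x Hx Hfx. destruct (Req_dec x z) as [|Hxz]; [assumption|].
    specialize (Hsign x Hx Hxz). rewrite Hfx, Rdiv_0_l in Hsign. lra. }
  assert (Hbefore : forall x, a <= x <= z ->
            phase x = - (PI / 2) - atan (f x / Derive f x)).
  { intros x Hx. rewrite phase_atan_ratio by (apply HDf; lra).
    destruct Rlt_dec as [Hpos|]; [|reflexivity].
    destruct (Req_dec x z) as [Hxz | Hxz].
    - rewrite Hxz, Hfz, Rdiv_0_l in Hpos. lra.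
    - specialize (Hsign x ltac:(lra) Hxz). nra. }
  assert (Hafter : forall x, z < x <= b ->
            phase x = PI / 2 - atan (f x / Derive f x)).
  { intros x Hx. rewrite phase_atan_ratio by (apply HDf; lra).
    destruct Rlt_dec as [|Hnpos]; [reflexivity|].
    specialize (Hsign x ltac:(lra) ltac:(lra)). nra. }
  assert (Hint : is_RInt rotation_rate a b
                   (atan (f b / Derive f b) - atan (f a / Derive f a))).
  { apply (is_RInt_rotation_rate (fun y => atan (f y / Derive f y))); [lra|].
    intros x Hx. apply is_derive_atan_ratio, HDf, Hx. }
  destruct (Rle_lt_or_eq_dec z b (proj2 Hz)) as [Hzb | Hzb].
  - exists (z :: nil). split; [repeat constructor; simpl; tauto | split].
    + intros x. simpl. split.
      * intros [<- | []]. split; [lra | exact Hfz].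
      * intros [Hx Hfx]. left. symmetry. apply Hzero; [lra | exact Hfx].
    + rewrite (Hbefore a), (Hafter b) by lra. simpl.
      replace (PI * 1 + (- (PI / 2) - atan (f a / Derive f a))
               - (PI / 2 - atan (f b / Derive f b)))
        with (atan (f b / Derive f b) - atan (f a / Derive f a)) by lra.
      exact Hint.
  - exists nil. split; [constructor | split].
    + intros x. simpl. split; [tauto|].
      intros [Hx Hfx]. assert (x = z) by (apply Hzero; [lra | exact Hfx]). lra.
    + rewrite (Hbefore a), (Hbefore b) by lra. simpl.
      replace (PI * 0 + (- (PI / 2) - atan (f a / Derive f a))
               - (- (PI / 2) - atan (f b / Derive f b)))
        with (atan (f b / Derive f b) - atan (f a / Derive f a)) by lra.
      exact Hint.
Qed.

Section ShortIntervals.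

Variables c M d p q : R.
Hypothesis nondeg : forall x, c <= sqrt (f x ^ 2 + Derive f x ^ 2).
Hypothesis DDf_bound : forall x, p <= x <= q -> Rabs (Derive (Derive f) x) <= M.
Hypothesis c_pos : 0 < c.
Hypothesis d_small : M * d <= c / 2.

Lemma Derive_abs_ge_at_zero (z : R) : f z = 0 -> c <= Rabs (Derive f z).
Proof.
  intros Hz. rewrite <- sqrt_Rsqr_abs.
  replace (Rsqr (Derive f z)) with (f z ^ 2 + Derive f z ^ 2)
    by (rewrite Hz; unfold Rsqr; ring).
  apply nondeg.
Qed.

Lemma Derive_sign_near_zero (z x : R) :
  p <= z <= q -> p <= x <= q -> f z = 0 -> Rabs (x - z) <= d ->
  0 < Derive f x * Derive f z.
Proof.
  intros Hz Hx Hfz Hxz.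
  destruct (MVT_Derive (Derive f) z x Df_derivable) as [y [Hy Hmvt]].
  destruct (between_bounds p q x y z Hz Hx Hy) as [Hypq _].
  assert (Hclose : Rabs (Derive f x - Derive f z) <= c / 2).
  { rewrite Hmvt, Rabs_mult.
    pose proof (DDf_bound y Hypq). pose proof (Rabs_pos (Derive (Derive f) y)).
    pose proof (Rabs_pos (x - z)). nra. }
  pose proof (Derive_abs_ge_at_zero z Hfz).
  revert Hclose. split_Rabs; nra.
Qed.

Lemma ratio_sign_near_zero (z x : R) :
  p <= z <= q -> p <= x <= q -> f z = 0 -> Rabs (x - z) <= d -> x <> z ->
  0 < (x - z) * (f x / Derive f x).
Proof.
  intros Hz Hx Hfz Hxz Hneq.
  destruct (MVT_Derive f z x f_derivable) as [y [Hy Hmvt]].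
  destruct (between_bounds p q x y z Hz Hx Hy) as [Hypq Hyz].
  assert (Hsy : 0 < Derive f y * Derive f z)
    by (apply Derive_sign_near_zero; auto; lra).
  assert (Hsx : 0 < Derive f x * Derive f z) by (apply Derive_sign_near_zero; auto).
  assert (HDx : Derive f x <> 0) by (intros E; rewrite E in Hsx; lra).
  assert (HDz : Derive f z <> 0) by (intros E; rewrite E in Hsx; lra).
  (* f x = f'(y) (x - z), and f'(y), f'(x) both have the sign of f'(z). *)
  rewrite Hfz, Rminus_0_r in Hmvt. rewrite Hmvt.
  replace ((x - z) * (Derive f y * (x - z) / Derive f x))
    with (Derive f y * Derive f z * (x - z) ^ 2 / (Derive f x * Derive f z))
    by (field; auto).
  apply Rdiv_lt_0_compat; [|exact Hsx].
  apply Rmult_lt_0_compat; [exact Hsy|]. apply pow2_gt_0. lra.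
Qed.

Lemma counts_zeros_short (a b : R) :
  p <= a -> a <= b -> b <= q -> b - a <= d -> counts_zeros a b.
Proof.
  intros Hpa Hab Hbq Hba.
  destruct (classic (exists z, a <= z <= b /\ f z = 0)) as [[z [Hz Hfz]] | Hnone].
  - assert (Hnear : forall x, a <= x <= b -> Rabs (x - z) <= d)
      by (intros x Hx; apply Rabs_le; lra).
    apply (counts_zeros_simple_zero a b z Hz Hfz).
    + intros x Hx HDx.
      pose proof (Derive_sign_near_zero z x ltac:(lra) ltac:(lra) Hfz (Hnear x Hx))
        as Hsign.
      rewrite HDx in Hsign. lra.
    + intros x Hx Hxz. apply ratio_sign_near_zero; auto; lra.
  - apply (counts_zeros_no_zero a b Hab).
    intros x Hx Hfx. apply Hnone. exists x. auto.
Qed.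

End ShortIntervals.

End Rotation.

Theorem corollary1 (f : R -> R) :
  C2_periodic f -> non_degenerate f ->
  exists n : nat, zero_set_card f n /\
    INR n = / PI * RInt (fun x => (Derive f x ^ 2 - f x * Derive (Derive f) x)
                                 / (f x ^ 2 + Derive f x ^ 2)) 0 (2 * PI).
Proof.
  intros [Hper [Hf [HDf HDDf]]] Hnd.
  pose proof (non_degenerate_sum_sq_pos f Hnd) as Hpos.
  destruct Hnd as [c [Hc Hnd]].
  pose proof PI_RGT_0 as HPI.
  destruct (continuity_ab_maj (fun x => Rabs (Derive (Derive f) x)) 0 (2 * PI))
    as [xM [HM _]]; [lra | |].
  { intros x _. apply continuity_pt_filterlim, (continuous_comp _ Rabs);
      [apply HDDf | apply continuous_Rabs]. }
  pose proof (Rabs_pos (Derive (Derive f) xM)) as HM0.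
  set (M := Rabs (Derive (Derive f) xM)) in HM, HM0.
  set (d := c / (2 * (M + 1))).
  assert (Hd : 0 < d) by (apply Rdiv_lt_0_compat; lra).
  assert (HMd : M * d <= c / 2).
  { apply (Rmult_le_reg_r (2 * (M + 1))); [lra|].
    replace (M * d * (2 * (M + 1))) with (M * c) by (unfold d; field; lra). nra. }
  assert (Hperiod : counts_zeros f 0 (2 * PI)).
  { apply (interval_chain _ _ _ d Hd); [lra | |].
    - intros x y z Hxy Hyz. apply counts_zeros_chasles. lra.
    - intros x y Hxy Hy Hyx.
      apply (counts_zeros_short f Hf HDf HDDf Hpos c M d 0 (2 * PI)); auto; lra. }
  destruct Hperiod as [l [Hl [Hin Hint]]].
  assert (Hphase : phase f (2 * PI) = phase f 0).
  { unfold phase. rewrite <- (Rplus_0_l (2 * PI)), Hper, Derive_periodic; auto. }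
  exists (length l). split; [exists l; auto|].
  change (fun x => _) with (rotation_rate f).
  rewrite (is_RInt_unique _ _ _ _ Hint), Hphase. field. lra.
Qed.
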